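(* Let $n\ge2$, $\pi\in\mathrm{Eq}(\mathsf{D}_n)$, and let $\mathbf{u}\approx\mathbf{v}$ be an identity satisfied by $\mathbf{C}_n\{\mathsf{Id}(\pi)\}$. (i) If $\mathbf{u}$ is a $(2n-1)$-limited cube-free rigid word, then $\mathbf{v}$ is also a $(2n-1)$-limited cube-free rigid word. (ii) If $\mathbf{u}\in\mathsf{D}_n$, then $\mathbf{v}\in\mathsf{D}_n$ and $(\mathbf{u},\mathbf{v})\in\pi$.
   Context: All varieties are varieties of monoids (signature: associative binary operation and identity constant $1$). Words are elements of the free monoid $X^*$ over a countably infinite set $X$ of variables; identities are pairs of words, and variables may be substituted by $1$. $\mathbf{V}\Sigma$ is the subvariety of $\mathbf{V}$ defined by $\Sigma$. $\mathbf{O}$ is the variety defined by $xyt_1xt_2y \approx yxt_1xt_2y$, $xt_1xyt_2y \approx xt_1yxt_2y$, $xt_1yt_2xy \approx xt_1yt_2yx$. For $n\ge2$, $\mathbf{C}_n=\mathbf{O}\{x^4\approx x^3,\ x^3t\approx tx^3,\ x^{2n}t_1\cdots t_{2n}\approx t_1x\cdots t_{2n}x\}$. For $0\le j\le n-1$, $\mathbf{d}_j = x^{a_0}t_1x^{a_1}\cdots t_{n-1}x^{a_{n-1}}$ with $a_j=1$, $a_i=2$ for $i\ne j$; $\mathsf{D}_n=\{\mathbf{d}_0,\dots,\mathbf{d}_{n-1}\}$. $\mathrm{Eq}(\mathsf{W})$ is the lattice of equivalence relations on $\mathsf{W}$ and $\mathsf{Id}(\pi)=\{\mathbf{u}\approx\mathbf{v}:(\mathbf{u},\mathbf{v})\in\pi\}$.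 A rigid word is $x^{e_0}t_1x^{e_1}\cdots t_rx^{e_r}$ with $r\ge0$, $e_i\ge0$, $x,t_1,\ldots,t_r$ distinct variables; it is $k$-limited if $\sum e_i\le k$ and cube-free if all $e_i<3$. *)

From mathcomp Require Import all_boot.
Set Implicit Arguments. Unset Strict Implicit. Unset Printing Implicit Defensive.

Definition word := seq nat.
Definition identity := (word * word)%type.

Record monoid := Monoid {
  mcarrier :> Type;
  mop : mcarrier -> mcarrier -> mcarrier;
  mone : mcarrier;
  mopA : forall a b c, mop a (mop b c) = mop (mop a b) c;
  mop1l : forall a, mop mone a = a;
  mop1r : forall a, mop a mone = a
}.

Definition eval (M : monoid) (f : nat -> M) (w : word) : M :=
  foldr (fun x m => mop (f x) m) (mone M) w.

Definition msat (M : monoid) (p : identity) : Prop :=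
  forall f : nat -> M, eval f p.1 = eval f p.2.

Definition msat_all (M : monoid) (Sigma : identity -> Prop) : Prop :=
  forall p, Sigma p -> msat M p.

Definition variety_sat (Sigma : identity -> Prop) (p : identity) : Prop :=
  forall M : monoid, msat_all M Sigma -> msat M p.

(* Variable names: x = 0, y = 1, t1 = 2, t2 = 3 in the identities of O. *)
Definition O_ids : seq identity :=
  [:: ([:: 0; 1; 2; 0; 3; 1], [:: 1; 0; 2; 0; 3; 1]);   (* xyt1xt2y ~ yxt1xt2y *)
      ([:: 0; 2; 0; 1; 3; 1], [:: 0; 2; 1; 0; 3; 1]);   (* xt1xyt2y ~ xt1yxt2y *)
      ([:: 0; 2; 1; 3; 0; 1], [:: 0; 2; 1; 3; 1; 0])].  (* xt1yt2xy ~ xt1yt2yx *)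

(* Extra identities of C_n; x = 0, t = 1, t_i = i. *)
Definition Cn_extra_ids (n : nat) : seq identity :=
  [:: (nseq 4 0, nseq 3 0);                               (* x^4 ~ x^3 *)
      (rcons (nseq 3 0) 1, 1 :: nseq 3 0);                (* x^3 t ~ t x^3 *)
      (nseq (2 * n) 0 ++ iota 1 (2 * n),                  (* x^{2n} t1...t2n ~ *)
       flatten [seq [:: i; 0] | i <- iota 1 (2 * n)])].   (*   t1 x ... t2n x *)

(* d_j = x^{a_0} t_1 x^{a_1} ... t_{n-1} x^{a_{n-1}}, x = 0, t_i = i. *)
Definition dexp (j i : nat) : nat := if i == j then 1 else 2.
Definition d (n j : nat) : word :=
  nseq (dexp j 0) 0 ++ flatten [seq i :: nseq (dexp j i) 0 | i <- iota 1 (n - 1)].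

Definition in_Dn (n : nat) (w : word) : Prop := exists2 j, j < n & w = d n j.

Definition equiv_on_Dn (n : nat) (pi : word -> word -> Prop) : Prop :=
  [/\ forall u v, pi u v -> in_Dn n u /\ in_Dn n v,
      forall u, in_Dn n u -> pi u u,
      forall u v, pi u v -> pi v u &
      forall u v w, pi u v -> pi v w -> pi u w].

Definition Cn_pi_ids (n : nat) (pi : word -> word -> Prop) (p : identity) : Prop :=
  p \in O_ids \/ p \in Cn_extra_ids n \/ pi p.1 p.2.

(* Rigid word x^{e_0} t_1 x^{e_1} ... t_r x^{e_r}: ts = [t_1..t_r], es = [e_0..e_r]. *)
Definition rigid_of (x : nat) (ts es : seq nat) : word :=
  nseq (head 0 es) x ++ flatten [seq p.1 :: nseq p.2 x | p <- zip ts (behead es)].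

Definition limited_cubefree_rigid (k : nat) (w : word) : Prop :=
  exists x ts es,
    [/\ uniq (x :: ts), size es = (size ts).+1, w = rigid_of x ts es,
        sumn es <= k & all (fun e => e < 3) es].

From Pilot Require Import Defs.
From mathcomp Require Import all_boot zify.
From Stdlib Require Import ClassicalEpsilon ProofIrrelevance.
From Stdlib Require Import FunctionalExtensionality PropExtensionality.
Set Implicit Arguments. Unset Strict Implicit. Unset Printing Implicit Defensive.

(* Fix a letter x.  Every substituted instance, in any context, of an identity of
   C_n{Id(pi)} either is trivial or has both sides outside the set of (2n-1)-limited
   cube-free rigid words in x: a repeated letter, too many x's or a cube x^3 appears.
   The one exception is an instance of d_j ~ d_k under a substitution sending the letter
   x of d_j to x and every t_i to a nonempty x-free word; its two sides are then rigid
   under the same condition, and if one side lies in D_n the instance is d_j ~ d_k itself.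
   So, for F the indicator of the rigid words or of a pi-class, the syntactic monoid of F
   satisfies the defining identities of C_n{Id(pi)}, and every identity u ~ v of the
   variety forces F u = F v. *)

Definition subst (s : nat -> word) (w : word) : word := flatten (map s w).

Definition respects T (F : word -> T) (p : identity) : Prop :=
  forall s y z, F (y ++ subst s p.1 ++ z) = F (y ++ subst s p.2 ++ z).

Section SyntacticMonoid.

Variables (T : Type) (F : word -> T).

Definition context (a : word) : word -> word -> T := fun y z => F (y ++ a ++ z).

(* The syntactic monoid of [F]: a word is identified with its context function,
   and products are computed on representatives chosen by [epsilon]. *)
Definition syn := {g : word -> word -> T | exists a, context a = g}.

Definition syn_repr (g : syn) : word :=
  epsilon (inhabits [::]) (fun a => context a = sval g).

Definition syn_of (a : word) : syn := exist _ (context a) (ex_intro _ a erefl).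

Definition syn_mul (g h : syn) : syn := syn_of (syn_repr g ++ syn_repr h).

Definition syn_one : syn := syn_of [::].

Lemma syn_reprP g : context (syn_repr g) = sval g.
Proof. exact: epsilon_spec (svalP g). Qed.

Lemma syn_repr_of a : context (syn_repr (syn_of a)) = context a.
Proof. exact: syn_reprP. Qed.

Lemma syn_inj (g h : syn) : sval g = sval h -> g = h.
Proof. by case: g h => [g pg] [h ph] /= eq_gh; subst h; congr exist; apply: proof_irrelevance. Qed.

Lemma context_catl a a' b : context a = context a' -> context (a ++ b) = context (a' ++ b).
Proof.
move=> eq_a; apply: functional_extensionality => y; apply: functional_extensionality => z.
by rewrite /context -!catA; apply: (f_equal (fun g => g y (b ++ z)) eq_a).
Qed.

Lemma context_catr a b b' : context b = context b' -> context (a ++ b) = context (a ++ b').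
Proof.
move=> eq_b; apply: functional_extensionality => y; apply: functional_extensionality => z.
by have := f_equal (fun g => g (y ++ a) z) eq_b; rewrite /context -!catA.
Qed.

Lemma syn_mulA : associative syn_mul.
Proof.
move=> g h k; apply: syn_inj => /=.
by rewrite (context_catr _ (syn_repr_of _)) (context_catl _ (syn_repr_of _)) catA.
Qed.

Lemma syn_mul1g : left_id syn_one syn_mul.
Proof. by move=> g; apply: syn_inj; rewrite /= (context_catl _ (syn_repr_of _)) syn_reprP. Qed.

Lemma syn_mulg1 : right_id syn_one syn_mul.
Proof.
by move=> g; apply: syn_inj; rewrite /= (context_catr _ (syn_repr_of _)) cats0 syn_reprP.
Qed.

Definition syntactic_monoid : monoid :=
  @Defs.Monoid syn syn_mul syn_one syn_mulA syn_mul1g syn_mulg1.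

Lemma eval_syntactic (h : nat -> syntactic_monoid) w :
  sval (eval h w) = context (subst (fun l => syn_repr (h l)) w).
Proof.
elim: w => [|l w IHw] //=.
by rewrite -(context_catr _ (etrans (syn_reprP _) IHw)).
Qed.

Lemma syntactic_monoid_sat p : respects F p -> msat syntactic_monoid p.
Proof.
move=> respF h; apply: syn_inj; rewrite !eval_syntactic.
by apply: functional_extensionality => y; apply: functional_extensionality => z; apply: respF.
Qed.

Lemma syntactic_monoid_eq u v : msat syntactic_monoid (u, v) -> F u = F v.
Proof.
move=> /(_ (fun l => syn_of [:: l])) /(f_equal sval); rewrite /= !eval_syntactic.
have context_letters w : context (subst (fun l => syn_repr (syn_of [:: l])) w) = context w.
  elim: w => [|l w IHw] //=.
  by rewrite (context_catl _ (syn_repr_of _)) /= (context_catr [:: l] IHw).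
by rewrite !context_letters => /(f_equal (fun g => g [::] [::])); rewrite /context !cats0.
Qed.

End SyntacticMonoid.

Lemma variety_sat_respects T (Sigma : identity -> Prop) (F : word -> T) u v :
  (forall p, Sigma p -> respects F p) -> variety_sat Sigma (u, v) -> F u = F v.
Proof.
move=> respF sat_uv; apply: syntactic_monoid_eq; apply: sat_uv => p /respF.
exact: syntactic_monoid_sat.
Qed.

Implicit Types (s : nat -> word) (w y z : word).

Lemma subst_cat s a b : subst s (a ++ b) = subst s a ++ subst s b.
Proof. by rewrite /subst map_cat flatten_cat. Qed.

Lemma subst_nseq s l c e : s l = [:: c] -> subst s (nseq e l) = nseq e c.
Proof. by move=> sl; elim: e => //= e; rewrite /subst /= sl => ->. Qed.

Lemma subst_id s w : {in w, forall l, s l = [:: l]} -> subst s w = w.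
Proof.
elim: w => //= l w IHw sw; rewrite /subst /= sw ?mem_head //= -/(subst s w) IHw //.
by move=> l' wl'; rewrite sw // inE wl' orbT.
Qed.

Lemma subst_filter_nil s a w : s a = [::] -> subst s w = subst s (filter (predC1 a) w).
Proof.
move=> sa; elim: w => //= l w IHw; case: eqP => [->|_] /=.
  by rewrite /subst /= sa -/(subst s w) IHw.
by rewrite /subst /= -!/(subst s _) IHw.
Qed.

Lemma count_subst (p : pred nat) s w : count p (subst s w) = sumn [seq count p (s l) | l <- w].
Proof. by rewrite /subst count_flatten -map_comp. Qed.

Lemma filter_subst (p : pred nat) s w :
  filter p (subst s w) = subst (fun l => filter p (s l)) w.
Proof. by rewrite /subst filter_flatten -map_comp. Qed.

Lemma size_subst_ge s w : {in w, forall l, s l != [::]} -> size w <= size (subst s w).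
Proof.
elim: w => //= l w IHw sw; rewrite /subst /= size_cat -/(subst s w).
have := sw l (mem_head _ _); case: (s l) => //= c t _.
by rewrite ltnS (leq_trans (IHw _)) ?leq_addl // => l' wl'; rewrite sw // inE wl' orbT.
Qed.

Lemma subst_fixed_singletons s w :
  {in w, forall l, s l != [::]} -> subst s w = w -> {in w, forall l, s l = [:: l]}.
Proof.
elim: w => //= l w IHw sw; rewrite /subst /= -/(subst s w).
have sw' : {in w, forall l', s l' != [::]} by move=> l' wl'; rewrite sw // inE wl' orbT.
have := size_subst_ge sw'; have := sw l (mem_head _ _).
case sl: (s l) => [|c [|c' t]] //= _ size_w.
  case=> cl /(IHw sw') fixed l'; rewrite inE => /predU1P [->|/fixed //].
  by rewrite sl cl.
by move=> /(congr1 size) /=; rewrite size_cat /=; lia.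
Qed.

Lemma sumn_count_le (f : nat -> nat) a w : count_mem a w * f a <= sumn (map f w).
Proof. by elim: w => //= c w IHw; case: eqP => [->|_] /=; lia. Qed.

Lemma sumn_split (f : nat -> nat) a w :
  sumn (map f w) = count_mem a w * f a + sumn (map f (filter (predC1 a) w)).
Proof. by elim: w => //= c w ->; case: (eqVneq c a) => [->|ca] /=; rewrite ?ca /=; lia. Qed.

Lemma count_subst_ge (c a : nat) s w y z :
  count_mem a w * count_mem c (s a) <= count_mem c (y ++ subst s w ++ z).
Proof.
have /= := sumn_count_le (fun l => count_mem c (s l)) a w.
rewrite !count_cat count_subst; lia.
Qed.

Lemma count0_flatten_pairs (t : word) :
  0 \notin t -> count_mem 0 (flatten [seq [:: i; 0] | i <- t]) = size t.
Proof. by elim: t => //= i t IHt; rewrite inE negb_or eq_sym => /andP[/negbTE -> /IHt ->]. Qed.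

Lemma filter0_flatten_pairs (t : word) :
  0 \notin t -> filter (predC1 0) (flatten [seq [:: i; 0] | i <- t]) = t.
Proof. by elim: t => //= i t IHt; rewrite inE negb_or eq_sym => /andP[/negbTE -> /IHt ->]. Qed.

Lemma filter_notin (x : nat) (t : word) : x \notin t -> filter (predC1 x) t = t.
Proof. by move=> xt; apply/all_filterP/allP => c /=; apply: contraTneq => ->. Qed.

Section RigidWords.

Variable x : nat.

Implicit Types (ps : seq (nat * nat)).

(* [cube_free k w]: the word [x^k w] has no factor [x^3] (meaningful for [k <= 2]). *)
Fixpoint cube_free (k : nat) (w : word) : bool :=
  match w with
  | [::] => true
  | c :: w' => if c == x then (k < 2) && cube_free k.+1 w' else cube_free 0 w'
  end.

Lemma cube_free_nseq k e w : k <= 2 ->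
  cube_free k (nseq e x ++ w) = (k + e <= 2) && cube_free (k + e) w.
Proof.
elim: e k => [|e IHe] k le_k2 /=; first by rewrite addn0 le_k2.
rewrite eqxx; case: (ltnP k 2) => [lt_k2|le2k] /=; first by rewrite IHe // addSnnS.
by apply/esym/negbTE; lia.
Qed.

Lemma cube_free_notin k w : x \notin w -> cube_free k w.
Proof.
elim: w k => //= c w IHw k; rewrite inE negb_or eq_sym => /andP[/negbTE -> xw].
exact: IHw.
Qed.

Lemma cube_free0_catl_notin (t : word) w : x \notin t -> cube_free 0 (t ++ w) = cube_free 0 w.
Proof. by elim: t => //= c t IHt; rewrite inE negb_or eq_sym => /andP[/negbTE -> /IHt]. Qed.

Lemma cube_free_catl_notin k (t : word) w : x \notin t -> t != [::] ->
  cube_free k (t ++ w) = cube_free 0 w.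
Proof.
case: t => //= c t; rewrite inE negb_or eq_sym => /andP[/negbTE -> xt] _.
exact: cube_free0_catl_notin.
Qed.

Lemma cube_free_cube k y m w : 2 < m -> cube_free k (y ++ nseq m x ++ w) = false.
Proof.
move=> lt2m; elim: y k => [|c y IHy] k /=; last by case: eqP; rewrite ?IHy ?andbF.
have [m_gt0 lt2km] : 0 < m /\ 2 < k + m by lia.
elim: m {lt2m} m_gt0 k lt2km => // m IHm _ k lt2km /=; rewrite eqxx.
by case: (ltnP k 2) => //= lt_k2; apply: IHm; lia.
Qed.

Definition block_word (e0 : nat) (bs : seq (word * nat)) : word :=
  nseq e0 x ++ flatten [seq b.1 ++ nseq b.2 x | b <- bs].

Lemma cube_free_block_word k e0 (bs : seq (word * nat)) z : k <= 2 ->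
  all (fun b : word * nat => (x \notin b.1) && (b.1 != [::])) bs -> x \notin z ->
  cube_free k (block_word e0 bs ++ z) = (k + e0 <= 2) && all (fun b => b.2 <= 2) bs.
Proof.
move=> le_k2 blocks_ok xz; rewrite -catA cube_free_nseq //.
case: (k + e0 <= 2) => //=; elim: bs (k + e0) blocks_ok => [|b bs IHbs] k' /=.
  by move=> _; apply: cube_free_notin.
case/andP=> /andP[xb1 b1_nil] blocks_ok.
rewrite -!catA cube_free_catl_notin // cube_free_nseq //=.
by case: (b.2 <= 2) => //=; apply: IHbs.
Qed.

Definition rigid (e0 : nat) (ps : seq (nat * nat)) : word :=
  nseq e0 x ++ flatten [seq p.1 :: nseq p.2 x | p <- ps].

Lemma rigid_block_word e0 ps : rigid e0 ps = block_word e0 [seq ([:: p.1], p.2) | p <- ps].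
Proof. by rewrite /block_word -map_comp. Qed.

Lemma rigid_decomp w : exists e0 ps, x \notin unzip1 ps /\ w = rigid e0 ps.
Proof.
elim: w => [|c w [e0 [ps [xps ->]]]]; first by exists 0, [::].
case: (eqVneq c x) => [->|cx]; first by exists e0.+1, ps.
by exists 0, ((c, e0) :: ps); rewrite /= inE negb_or eq_sym cx.
Qed.

Lemma filter_rigid e0 ps : x \notin unzip1 ps -> filter (predC1 x) (rigid e0 ps) = unzip1 ps.
Proof.
rewrite /rigid filter_cat filter_nseq /= eqxx /=.
elim: ps => //= p ps IHps; rewrite inE negb_or eq_sym => /andP[xp xps].
by rewrite xp filter_cat filter_nseq /= eqxx IHps.
Qed.

Lemma count_rigid e0 ps : x \notin unzip1 ps ->
  count_mem x (rigid e0 ps) = e0 + sumn (unzip2 ps).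
Proof.
rewrite /rigid count_cat count_nseq /= eqxx mul1n => xps; congr addn; move: xps.
elim: ps => //= p ps IHps; rewrite inE negb_or => /andP[/negbTE xp xps].
by rewrite eq_sym xp count_cat count_nseq /= eqxx mul1n IHps.
Qed.

Lemma cube_free_rigid e0 ps : x \notin unzip1 ps ->
  cube_free 0 (rigid e0 ps) = (e0 <= 2) && all (fun e => e <= 2) (unzip2 ps).
Proof.
move=> xps; rewrite rigid_block_word -[block_word _ _]cats0 cube_free_block_word //.
  by rewrite !all_map.
rewrite all_map; apply/allP => p ps_p /=; rewrite inE andbT.
by apply: contraNneq xps => ->; apply: map_f.
Qed.

Definition rigidb (k : nat) (w : word) : bool :=
  [&& uniq (filter (predC1 x) w), count_mem x w <= k & cube_free 0 w].

Lemma nonrigid_repeat {k} c {w} : c != x -> 1 < count_mem c w -> ~~ rigidb k w.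
Proof.
move=> cx lt1c; apply/negP => /and3P[uniq_w _ _]; move: lt1c.
have := count_uniq_mem c uniq_w; rewrite count_filter.
rewrite (@eq_count _ _ (pred1 c)) => [->|l /=]; first by case: (c \in _).
by case: eqP => // ->; rewrite cx.
Qed.

Lemma nonrigid_count k w : k < count_mem x w -> ~~ rigidb k w.
Proof. by move=> lt_k; apply/negP => /and3P[_ le_k _]; lia. Qed.

Lemma nonrigid_cube k y m w : 2 < m -> ~~ rigidb k (y ++ nseq m x ++ w).
Proof. by move=> lt2m; rewrite /rigidb cube_free_cube ?andbF. Qed.

Lemma nonrigid_subst_repeat {k} c a s l {y z} : c != x -> c \in s a -> 1 < count_mem a l ->
  ~~ rigidb k (y ++ subst s l ++ z).
Proof.
move=> cx c_sa lt1a; apply: (nonrigid_repeat cx).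
have := count_subst_ge c a s l y z.
have : 0 < count_mem c (s a) by rewrite -has_count has_pred1.
nia.
Qed.

Lemma nonrigid_subst_count k a s l {y z} : k < count_mem a l * count_mem x (s a) ->
  ~~ rigidb k (y ++ subst s l ++ z).
Proof. by move=> lt_k; apply: nonrigid_count (leq_trans lt_k (count_subst_ge _ _ _ _ _ _)). Qed.

Definition same_or_nonrigid k (L R : word) : Prop :=
  L = R \/ ~~ rigidb k L /\ ~~ rigidb k R.

Lemma same_or_nonrigid_congr T (F : word -> T) (c : T) k L R :
  (forall w, ~~ rigidb k w -> F w = c) -> same_or_nonrigid k L R -> F L = F R.
Proof. by move=> F_c [-> // | [/F_c -> /F_c ->]]. Qed.

Lemma xpower_or_other w : (exists2 c, c \in w & c != x) \/ w = nseq (size w) x.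
Proof.
case all_x: (all (pred1 x) w); first by right; apply/all_pred1P.
by left; move/negbT: all_x; rewrite -has_predC => /hasP[c wc /= cx]; exists c.
Qed.

Lemma O_instance k s y z l r : (l, r) \in O_ids ->
  same_or_nonrigid k (y ++ subst s l ++ z) (y ++ subst s r ++ z).
Proof.
have nseqC a b t : nseq a x ++ nseq b x ++ t = nseq b x ++ nseq a x ++ t.
  by rewrite !catA -!nseqD addnC.
rewrite !inE => /or3P[] /eqP [-> ->];
  (case: (xpower_or_other (s 0)) => [[c c_s0 cx] | s0E];
    first by right; split; apply: (nonrigid_subst_repeat cx c_s0));
  (case: (xpower_or_other (s 1)) => [[c c_s1 cx] | s1E];
    first by right; split; apply: (nonrigid_subst_repeat cx c_s1));
  by left; rewrite /subst /= s0E s1E nseqC.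
Qed.

Lemma nonrigid_subst_cube k a s p q m y z : s a = nseq m x -> 0 < m ->
  ~~ rigidb k (y ++ subst s (p ++ [:: a; a; a] ++ q) ++ z).
Proof.
move=> sa m_gt0; rewrite !subst_cat.
have -> : subst s [:: a; a; a] = nseq (3 * m) x.
  by rewrite /subst /= sa cats0 -!nseqD; congr nseq; lia.
have := @nonrigid_cube k (y ++ subst s p) (3 * m) (subst s q ++ z).
by rewrite !catA; apply; lia.
Qed.

Lemma Cn_extra_instance n s y z l r : 0 < n -> (l, r) \in Cn_extra_ids n ->
  same_or_nonrigid (2 * n - 1) (y ++ subst s l ++ z) (y ++ subst s r ++ z).
Proof.
move=> n_gt0; have ts0 : 0 \notin iota 1 (2 * n) by rewrite mem_iota.
have count_r := count0_flatten_pairs ts0; rewrite size_iota in count_r.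
have filter_r := filter0_flatten_pairs ts0.
have count_l : count_mem 0 (nseq (2 * n) 0 ++ iota 1 (2 * n)) = 2 * n.
  by rewrite count_cat count_nseq (count_memPn ts0) /= mul1n addn0.
have filter_l : filter (predC1 0) (nseq (2 * n) 0 ++ iota 1 (2 * n)) = iota 1 (2 * n).
  by rewrite filter_cat filter_nseq /= filter_notin.
case: (xpower_or_other (s 0)) => [[c c_s0 cx] | s0E].
  rewrite !inE => /or3P[] /eqP [-> ->]; right; split;
    by apply: (nonrigid_subst_repeat cx c_s0); rewrite ?count_l ?count_r /=; lia.
case: (posnP (size (s 0))) => [s0_size0 | s0_gt0]; last first.
  have cube p q := @nonrigid_subst_cube (2 * n - 1) 0 s p q _ y z s0E s0_gt0.
  have count_s0 : count_mem x (s 0) = size (s 0) by rewrite s0E count_nseq /= eqxx mul1n size_nseq.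
  rewrite !inE => /or3P[] /eqP [-> ->]; right; split.
  - exact: (cube [::] [:: 0]).
  - exact: (cube [::] [::]).
  - exact: (cube [::] [:: 1]).
  - exact: (cube [:: 1] [::]).
  - apply: (@nonrigid_subst_count _ 0); rewrite count_l count_s0.
    by apply: leq_trans (leq_pmulr _ s0_gt0); rewrite ltn_subrL muln_gt0 n_gt0.
  - apply: (@nonrigid_subst_count _ 0); rewrite count_r count_s0.
    by apply: leq_trans (leq_pmulr _ s0_gt0); rewrite ltn_subrL muln_gt0 n_gt0.
have s0_nil : s 0 = [::] by apply/size0nil.
rewrite !inE => /or3P[] /eqP [-> ->]; left.
- by rewrite /subst /= s0_nil.
- by rewrite /subst /= s0_nil cats0.
- rewrite [subst s (nseq _ _ ++ _)](subst_filter_nil _ s0_nil).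
  by rewrite [subst s (flatten _)](subst_filter_nil _ s0_nil) filter_l filter_r.
Qed.

End RigidWords.

Lemma limited_cubefree_rigidP k w :
  limited_cubefree_rigid k w <-> exists x, rigidb x k w.
Proof.
split.
  case=> x [ts [es [/= /andP[xts uniq_ts] + -> +]]].
  case: es => // e0 es /= [size_es] sum_es /andP[le_e02 les].
  have unzip1E : unzip1 (zip ts es) = ts by rewrite unzip1_zip // size_es.
  have unzip2E : unzip2 (zip ts es) = es by rewrite unzip2_zip // size_es.
  have xzip : x \notin unzip1 (zip ts es) by rewrite unzip1E.
  exists x; rewrite /rigidb [rigid_of _ _ _]/(rigid x e0 (zip ts es)).
  rewrite filter_rigid // count_rigid // cube_free_rigid // unzip1E unzip2E uniq_ts /=.
  by rewrite sum_es; apply/and3P; split.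
case=> x /and3P[]; have [e0 [ps [xps ->]]] := rigid_decomp x w.
rewrite filter_rigid // count_rigid // cube_free_rigid // => uniq_ps sum_ps /andP[le_e02 les].
exists x, (unzip1 ps), (e0 :: unzip2 ps); split => //=.
- by rewrite xps.
- by rewrite !size_map.
- by rewrite /rigid_of /= zip_unzip.
- by apply/andP; split.
Qed.

Section DWords.

Variable n : nat.

Lemma dexp_le2 j i : dexp j i <= 2.
Proof. by rewrite /dexp; case: eqP. Qed.

Lemma dexp_adjacent j i : 2 < dexp j i + dexp j i.+1.
Proof. by rewrite /dexp; case: eqP => [->|_]; case: eqP => //; lia. Qed.

Lemma sumn_dexp j (t : seq nat) : sumn (map (dexp j) t) + count_mem j t = 2 * size t.
Proof. by elim: t => //= i t; rewrite /dexp eq_sym; case: eqP => _ /=; lia. Qed.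

Lemma d_rigid j : d n j = rigid 0 (dexp j 0) [seq (i, dexp j i) | i <- iota 1 (n - 1)].
Proof. by rewrite /d /rigid -map_comp. Qed.

Lemma notin0_iota1 m : 0 \notin iota 1 m.
Proof. by rewrite mem_iota. Qed.

Lemma unzip1_d j : unzip1 [seq (i, dexp j i) | i <- iota 1 (n - 1)] = iota 1 (n - 1).
Proof. by elim: (iota 1 (n - 1)) => //= i t ->. Qed.

Lemma unzip2_d j : unzip2 [seq (i, dexp j i) | i <- iota 1 (n - 1)] = map (dexp j) (iota 1 (n - 1)).
Proof. by elim: (iota 1 (n - 1)) => //= i t ->. Qed.

Lemma filter_d j : filter (predC1 0) (d n j) = iota 1 (n - 1).
Proof. by rewrite d_rigid filter_rigid unzip1_d ?notin0_iota1. Qed.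

Lemma count_d j : j < n -> count_mem 0 (d n j) = 2 * n - 1.
Proof.
move=> lt_jn; rewrite d_rigid count_rigid ?unzip1_d ?notin0_iota1 // unzip2_d.
have := sumn_dexp j (iota 0 n); rewrite size_iota count_uniq_mem ?iota_uniq //.
rewrite mem_iota lt_jn; case: n lt_jn => // n' _ /=; rewrite subn1 /=; lia.
Qed.

Lemma mem_d j l : l \in d n j -> (l == 0) || (l \in iota 1 (n - 1)).
Proof. by case: eqP => //= /eqP l0 dl; rewrite -(filter_d j) mem_filter /= l0. Qed.

Lemma rigidb_d j : j < n -> rigidb 0 (2 * n - 1) (d n j).
Proof.
move=> lt_jn; rewrite /rigidb filter_d iota_uniq count_d // leqnn /=.
rewrite d_rigid cube_free_rigid ?unzip1_d ?notin0_iota1 // dexp_le2 /=.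
by rewrite unzip2_d; apply/allP => e /mapP[i _ ->]; apply: dexp_le2.
Qed.

Lemma sumn_map_d (f : nat -> nat) j : j < n ->
  sumn (map f (d n j)) = (2 * n - 1) * f 0 + sumn (map f (iota 1 (n - 1))).
Proof. by move=> lt_jn; rewrite (sumn_split f 0) count_d // filter_d. Qed.

Lemma subst_d_nil0 s j : s 0 = [::] -> subst s (d n j) = subst s (iota 1 (n - 1)).
Proof. by move=> s0; rewrite (subst_filter_nil _ s0) filter_d. Qed.

Lemma subst_d_letter0 s x j : s 0 = [:: x] ->
  subst s (d n j) = block_word x (dexp j 0) [seq (s i, dexp j i) | i <- iota 1 (n - 1)].
Proof.
move=> s0; rewrite /d subst_cat (subst_nseq _ s0) /block_word; congr cat.
elim: (iota 1 (n - 1)) => //= i t IHt.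
by rewrite -[i :: _]cat1s !subst_cat (subst_nseq _ s0) IHt /subst /= cats0 catA.
Qed.

Lemma d_prefix j m : exists p,
  nseq (dexp j 0) 0 ++ flatten [seq i :: nseq (dexp j i) 0 | i <- iota 1 m]
  = p ++ nseq (dexp j m) 0.
Proof.
elim: m => [|m [p IHp]]; first by exists [::]; rewrite cats0.
exists (p ++ nseq (dexp j m) 0 ++ [:: m.+1]).
have -> : iota 1 m.+1 = iota 1 m ++ [:: m.+1] by rewrite -(addn1 m) iotaD add1n addn1.
by rewrite map_cat flatten_cat catA IHp /= cats0 -!catA.
Qed.

Lemma d_split j i : 0 < i < n ->
  exists p q, d n j = p ++ nseq (dexp j i.-1) 0 ++ i :: nseq (dexp j i) 0 ++ q.
Proof.
case: i => // i /andP[_ lt_in]; have [p pE] := d_prefix j i.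
exists p, (flatten [seq l :: nseq (dexp j l) 0 | l <- iota i.+2 (n - i.+2)]).
rewrite /d (_ : n - 1 = i + (n - i.+2).+1); last by lia.
by rewrite iotaD map_cat flatten_cat catA pE add1n /= -!catA.
Qed.

Lemma nonrigid_subst_d_gap x k s y z j i : 0 < i < n -> s 0 = [:: x] -> s i = [::] ->
  ~~ rigidb x k (y ++ subst s (d n j) ++ z).
Proof.
move=> i_range s0 si; have [p [q ->]] := d_split j i_range.
have si' : subst s [:: i] = [::] by rewrite /subst /= si.
rewrite -[i :: _]cat1s !subst_cat si' !(subst_nseq _ s0) /=.
have := @nonrigid_cube x k (y ++ subst s p) (dexp j i.-1 + dexp j i) (subst s q ++ z).
rewrite nseqD !catA; apply; case: i i_range {si si'} => // i _.
exact: dexp_adjacent.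
Qed.

Definition admissible x s y z : bool :=
  [&& s 0 == [:: x], all (fun i => (x \notin s i) && (s i != [::])) (iota 1 (n - 1)),
      x \notin y & x \notin z].

Lemma count_subst_d (c : nat) s y z j : j < n ->
  count_mem c (y ++ subst s (d n j) ++ z) =
  count_mem c y + (2 * n - 1) * count_mem c (s 0)
  + sumn [seq count_mem c (s i) | i <- iota 1 (n - 1)] + count_mem c z.
Proof.
move=> lt_jn; rewrite !count_cat count_subst (sumn_map_d (fun l => count_mem c (s l))) //.
by rewrite !addnA.
Qed.

Lemma admissible_of_rigid x s y z j : 1 < n -> j < n -> s 0 != [::] ->
  rigidb x (2 * n - 1) (y ++ subst s (d n j) ++ z) -> admissible x s y z.
Proof.
move=> lt1n lt_jn s0_nil rigid_L.
have [[c c_s0 cx] | s0E] := xpower_or_other x (s 0).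
  by rewrite (negbTE (nonrigid_subst_repeat cx c_s0 _)) ?count_d // in rigid_L; lia.
have s0_gt0 : 0 < size (s 0) by rewrite lt0n size_eq0.
have le_P : 2 * n - 1 <= (2 * n - 1) * size (s 0) by rewrite leq_pmulr.
have := rigid_L => /and3P[_ + _]; rewrite count_subst_d // s0E count_nseq /= eqxx mul1n.
move: le_P; set P := (2 * n - 1) * size (s 0).
set Y := count _ y; set Z := count _ z; set S := sumn _.
move=> le_P bound; have [Y0 S0 Z0 P_eq] : [/\ Y = 0, S = 0, Z = 0 & P = 2 * n - 1].
  by clearbody P S Y Z; split; lia.
have s0x : s 0 = [:: x].
  rewrite s0E (_ : size (s 0) = 1) //; apply/eqP.
  by rewrite -(@eqn_pmul2l (2 * n - 1)) ?muln1 -/P ?P_eq //; lia.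
rewrite /admissible s0x eqxx /=; apply/and3P; split; [|exact/count_memPn/Y0|exact/count_memPn/Z0].
apply/allP => i t_i; apply/andP; split.
  apply/count_memPn/eqP; rewrite -leqn0 -S0.
  apply: leq_trans (sumn_count_le (fun l => count_mem x (s l)) i _); rewrite leq_pmull //.
  by rewrite -has_count has_pred1.
apply: contraTneq rigid_L => si; apply: nonrigid_subst_d_gap s0x si.
by move: t_i; rewrite mem_iota; lia.
Qed.

Lemma filter_subst_d_admissible x s y z j : admissible x s y z ->
  filter (predC1 x) (y ++ subst s (d n j) ++ z) = y ++ subst s (iota 1 (n - 1)) ++ z.
Proof.
case/and4P=> /eqP s0x s_ok xy xz.
rewrite !filter_cat filter_subst subst_d_nil0 ?s0x /= ?eqxx // !filter_notin //.
congr (_ ++ _ ++ _); congr flatten; apply/eq_in_map => i /(allP s_ok) /andP[xsi _].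
exact: filter_notin.
Qed.

Lemma rigidb_subst_d_admissible x s y z j : j < n -> admissible x s y z ->
  rigidb x (2 * n - 1) (y ++ subst s (d n j) ++ z) = uniq (y ++ subst s (iota 1 (n - 1)) ++ z).
Proof.
move=> lt_jn adm; rewrite /rigidb filter_subst_d_admissible // count_subst_d //.
case/and4P: adm => /eqP s0x s_ok xy xz.
have S0 : sumn [seq count_mem x (s i) | i <- iota 1 (n - 1)] = 0.
  elim: (iota 1 (n - 1)) s_ok => //= i t IHt /andP[/andP[xsi _] /IHt ->].
  by rewrite (count_memPn xsi).
rewrite s0x /= eqxx S0 (count_memPn xy) (count_memPn xz) muln1 add0n !addn0 leqnn /=.
rewrite cube_free0_catl_notin // (subst_d_letter0 _ s0x) cube_free_block_word ?all_map //.
by rewrite add0n dexp_le2 (_ : all _ _) ?andbT //; apply/allP => i _; apply: dexp_le2.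
Qed.

Lemma admissible_fixes_d s y z j : admissible 0 s y z ->
  in_Dn n (y ++ subst s (d n j) ++ z) -> forall k, y ++ subst s (d n k) ++ z = d n k.
Proof.
move=> adm [m _ L_eq]; have := filter_subst_d_admissible j adm.
rewrite L_eq filter_d; case/and4P: adm => /eqP s00 s_ok _ _ fixed.
have s_nil : {in iota 1 (n - 1), forall i, s i != [::]}.
  by move=> i /(allP s_ok) /andP[].
have [y_nil z_nil] : y = [::] /\ z = [::].
  have := size_subst_ge s_nil; move/(congr1 size): fixed; rewrite !size_cat !size_iota.
  set S := size (subst _ _); clearbody S.
  by case: y z {L_eq} => [|? ?] [|? ?] //=; lia.
move: fixed; rewrite y_nil z_nil cats0 => /esym /(subst_fixed_singletons s_nil) s_id k.
rewrite /= cats0 subst_id // => l /mem_d /orP[/eqP -> // | /s_id //].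
Qed.

Lemma pi_instance x s y z j k : 1 < n -> j < n -> k < n ->
  same_or_nonrigid x (2 * n - 1) (y ++ subst s (d n j) ++ z) (y ++ subst s (d n k) ++ z)
  \/ admissible x s y z.
Proof.
move=> lt1n lt_jn lt_kn; case: (eqVneq (s 0) [::]) => [s0_nil | s0_nnil].
  by left; left; rewrite !subst_d_nil0.
case adm: (admissible x s y z); [by right | left; right].
by split; apply: contraFN adm; apply: admissible_of_rigid.
Qed.

End DWords.

Lemma rigidb_respects n pi x : 1 < n -> equiv_on_Dn n pi ->
  forall p, Cn_pi_ids n pi p -> respects (rigidb x (2 * n - 1)) p.
Proof.
move=> lt1n [pi_Dn _ _ _].
have nonrigid_false w : ~~ rigidb x (2 * n - 1) w -> rigidb x (2 * n - 1) w = false := @negbTE _.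
move=> [l r] [O_lr | [extra_lr | /= pi_lr]] s y z /=.
- exact: same_or_nonrigid_congr nonrigid_false (O_instance x _ s y z O_lr).
- exact: same_or_nonrigid_congr nonrigid_false (Cn_extra_instance x s y z (ltnW lt1n) extra_lr).
have [[j lt_jn ->] [k lt_kn ->]] := pi_Dn _ _ pi_lr.
case: (pi_instance x s y z lt1n lt_jn lt_kn) => [|adm].
  exact: same_or_nonrigid_congr nonrigid_false.
by rewrite !rigidb_subst_d_admissible.
Qed.

Lemma pi_class_respects n pi w0 : 1 < n -> equiv_on_Dn n pi ->
  forall p, Cn_pi_ids n pi p -> respects (pi w0) p.
Proof.
move=> lt1n [pi_Dn _ pi_sym pi_trans].
have pi_rigid w : ~~ rigidb 0 (2 * n - 1) w -> pi w0 w = False.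
  move=> nonrigid_w; apply: propositional_extensionality; split=> // /pi_Dn[_ [j lt_jn w_eq]].
  by rewrite w_eq rigidb_d in nonrigid_w.
move=> [l r] [O_lr | [extra_lr | /= pi_lr]] s y z /=.
- exact: same_or_nonrigid_congr pi_rigid (O_instance 0 _ s y z O_lr).
- exact: same_or_nonrigid_congr pi_rigid (Cn_extra_instance 0 s y z (ltnW lt1n) extra_lr).
have [[j lt_jn l_eq] [k lt_kn r_eq]] := pi_Dn _ _ pi_lr; rewrite l_eq r_eq in pi_lr *.
case: (pi_instance 0 s y z lt1n lt_jn lt_kn) => [|adm].
  exact: same_or_nonrigid_congr pi_rigid.
apply: propositional_extensionality; split=> pi_w0.
- have fixed := admissible_fixes_d adm (pi_Dn _ _ pi_w0).2.
  by rewrite (fixed k); rewrite (fixed j) in pi_w0; apply: pi_trans pi_w0 pi_lr.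
- have fixed := admissible_fixes_d adm (pi_Dn _ _ pi_w0).2.
  by rewrite (fixed j); rewrite (fixed k) in pi_w0; apply: pi_trans pi_w0 (pi_sym _ _ pi_lr).
Qed.

Theorem lemma4p3 (n : nat) (pi : word -> word -> Prop) (u v : word) :
  2 <= n -> equiv_on_Dn n pi ->
  variety_sat (Cn_pi_ids n pi) (u, v) ->
  (limited_cubefree_rigid (2 * n - 1) u -> limited_cubefree_rigid (2 * n - 1) v) /\
  (in_Dn n u -> in_Dn n v /\ pi u v).
Proof.
move=> lt1n pi_equiv sat_uv; split.
  case/limited_cubefree_rigidP => x rigid_u; apply/limited_cubefree_rigidP; exists x.
  by rewrite -(variety_sat_respects (rigidb_respects x lt1n pi_equiv) sat_uv).
move=> Dn_u; case: (pi_equiv) => pi_Dn pi_refl _ _.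
have pi_uv : pi u v.
  by rewrite -(variety_sat_respects (pi_class_respects u lt1n pi_equiv) sat_uv); apply: pi_refl.
by split=> //; case: (pi_Dn _ _ pi_uv).
Qed.
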